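(* For a path connected space $X$ with basepoint $x_0$, the following are equivalent: (1) $\pi_1^{\tau}(X,x_0)$ is discrete; (2) $\pi_1^{qtop}(X,x_0)$ is discrete; (3) every null-homotopic loop $\alpha\in\Omega(X,x_0)$ has an open neighborhood in $\Omega(X,x_0)$ containing only null-homotopic loops.
   Context: $\Omega(X,x_0)$ is the space of loops at $x_0$ with the compact-open topology; $\pi_1^{qtop}(X,x_0)$ is $\pi_1(X,x_0)$ with the quotient topology via $\alpha\mapsto[\alpha]$. $F_M(S)$ is the free (Markov) topological group on a space $S$. For a group with topology $G$, $\tau(G)$ is $G$ with the quotient topology with respect to the multiplication epimorphism $m_G:F_M(G)\to G$ (generator $g\mapsto g$). $\pi_1^{\tau}=\tau\circ\pi_1^{qtop}$. *)

From Stdlib Require Import Reals Lra List ClassicalEpsilon Relations.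
Open Scope R_scope.
Set Implicit Arguments.

Definition topology (T : Type) := (T -> Prop) -> Prop.

Definition is_topology (T : Type) (op : topology T) : Prop :=
  op (fun _ => True) /\
  (forall U V, op U -> op V -> op (fun x => U x /\ V x)) /\
  (forall F : (T -> Prop) -> Prop, (forall U, F U -> op U) ->
     op (fun x => exists U, F U /\ U x)).

Definition continuous (A B : Type) (opA : topology A) (opB : topology B)
  (f : A -> B) : Prop :=
  forall V, opB V -> opA (fun a => V (f a)).

Definition prod_top (A B : Type) (opA : topology A) (opB : topology B)
  : topology (A * B) :=
  fun W => forall p, W p -> exists U V, opA U /\ opB V /\ U (fst p) /\ V (snd p) /\
     (forall a b, U a -> V b -> W (a, b)).

Definition quotient_top (A B : Type) (opA : topology A) (q : A -> B)
  : topology B := fun V => opA (fun a => V (q a)).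

Definition generated_top (T : Type) (S : (T -> Prop) -> Prop) : topology T :=
  fun W => forall x, W x -> exists l : list (T -> Prop),
     (forall U, In U l -> S U) /\ (forall U, In U l -> U x) /\
     (forall y, (forall U, In U l -> U y) -> W y).

Definition discrete (T : Type) (op : topology T) : Prop := forall U, op U.

Definition compact (T : Type) (op : topology T) (K : T -> Prop) : Prop :=
  forall C : (T -> Prop) -> Prop, (forall U, C U -> op U) ->
    (forall x, K x -> exists U, C U /\ U x) ->
    exists l : list (T -> Prop), (forall U, In U l -> C U) /\
      (forall x, K x -> exists U, In U l /\ U x).

Definition quot (A : Type) (R : A -> A -> Prop) : Type :=
  {P : A -> Prop | exists a, P = R a}.
Definition cls (A : Type) (R : A -> A -> Prop) (a : A) : quot R :=
  exist _ (R a) (ex_intro _ a eq_refl).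
Definition repr (A : Type) (R : A -> A -> Prop) (c : quot R) : A :=
  proj1_sig (constructive_indefinite_description _ (proj2_sig c)).

Definition I : Type := {t : R | 0 <= t <= 1}.
Definition ival (t : I) : R := proj1_sig t.
Lemma i0_pf : 0 <= 0 <= 1. Proof. lra. Qed.
Lemma i1_pf : 0 <= 1 <= 1. Proof. lra. Qed.
Definition i0 : I := exist _ 0 i0_pf.
Definition i1 : I := exist _ 1 i1_pf.
Lemma clamp_pf (r : R) : 0 <= Rmax 0 (Rmin 1 r) <= 1.
Proof. unfold Rmax, Rmin; repeat destruct Rle_dec; lra. Qed.
Definition clampI (r : R) : I := exist _ (Rmax 0 (Rmin 1 r)) (clamp_pf r).

Definition I_top : topology I :=
  fun V => forall t, V t -> exists d, 0 < d /\
    forall s : I, Rabs (ival s - ival t) < d -> V s.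

Section Loops.
Variables (X : Type) (op : topology X) (x0 : X).

Definition path_connected : Prop :=
  forall x y : X, exists p : I -> X, continuous I_top op p /\ p i0 = x /\ p i1 = y.

Definition is_loop (f : I -> X) : Prop :=
  continuous I_top op f /\ f i0 = x0 /\ f i1 = x0.

Definition Omega : Type := {f : I -> X | is_loop f}.

Definition CO_subbasis (W : Omega -> Prop) : Prop :=
  exists (K : I -> Prop) (U : X -> Prop), compact I_top K /\ op U /\
    forall a : Omega, W a <-> (forall t, K t -> U (proj1_sig a t)).
Definition Omega_top : topology Omega := generated_top CO_subbasis.

Lemma const_is_loop : is_loop (fun _ => x0).
Proof.
  split; [|split; reflexivity].
  intros V _ t Ht; exists 1; split; [lra|]; intros; exact Ht.
Qed.
Definition const_loop : Omega := exist _ (fun _ => x0) const_is_loop.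

Definition homotopic (a b : Omega) : Prop :=
  exists H : I * I -> X, continuous (prod_top I_top I_top) op H /\
    (forall s, H (s, i0) = proj1_sig a s) /\
    (forall s, H (s, i1) = proj1_sig b s) /\
    (forall t, H (i0, t) = x0 /\ H (i1, t) = x0).

Definition null_homotopic (a : Omega) : Prop := homotopic a const_loop.

Definition pi1 : Type := quot homotopic.
Definition pi1_cls (a : Omega) : pi1 := cls homotopic a.
Definition pi1_qtop : topology pi1 := quotient_top Omega_top pi1_cls.

Definition concat (f g : I -> X) : I -> X := fun s =>
  if Rle_dec (ival s) (1/2) then f (clampI (2 * ival s))
  else g (clampI (2 * ival s - 1)).
Definition rev_path (f : I -> X) : I -> X := fun s => f (clampI (1 - ival s)).
(* turn a function into a loop (it is always applied to genuine loops) *)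
Definition loop_of (f : I -> X) : Omega :=
  match excluded_middle_informative (is_loop f) with
  | left h => exist _ f h
  | right _ => const_loop
  end.

Definition pi1_mul (c d : pi1) : pi1 :=
  pi1_cls (loop_of (concat (proj1_sig (repr c)) (proj1_sig (repr d)))).
Definition pi1_inv (c : pi1) : pi1 :=
  pi1_cls (loop_of (rev_path (proj1_sig (repr c)))).
Definition pi1_one : pi1 := pi1_cls const_loop.

End Loops.

Section FreeGroup.
Variable S : Type.
(* letters: (true, x) = x, (false, x) = x^{-1} *)
Definition word := list (bool * S).
Inductive red1 : word -> word -> Prop :=
| red1_cancel : forall w1 w2 b x,
    red1 (w1 ++ (b, x) :: (negb b, x) :: w2) (w1 ++ w2).
Definition wequiv : word -> word -> Prop := clos_refl_sym_trans word red1.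

Definition FG : Type := quot wequiv.
Definition FG_mul (a b : FG) : FG := cls wequiv (repr a ++ repr b).
Definition winv (w : word) : word := rev (map (fun p => (negb (fst p), snd p)) w).
Definition FG_inv (a : FG) : FG := cls wequiv (winv (repr a)).
Definition FG_gen (x : S) : FG := cls wequiv ((true, x) :: nil).

Definition group_topology (T : topology FG) : Prop :=
  is_topology T /\
  continuous (prod_top T T) T (fun p => FG_mul (fst p) (snd p)) /\
  continuous T T FG_inv.

(* F_M(S): the finest group topology on the free group making the
   generator inclusion continuous (supremum of all such topologies) *)
Definition markov_top (opS : topology S) : topology FG :=
  generated_top (fun U => exists T, group_topology T /\
                    continuous opS T FG_gen /\ T U).
End FreeGroup.

Section Tau.
Variables (G : Type) (opG : topology G) (gmul : G -> G -> G) (ginv : G -> G) (gone : G).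
Fixpoint eval_word (w : word G) : G :=
  match w with
  | nil => gone
  | (true, g) :: w' => gmul g (eval_word w')
  | (false, g) :: w' => gmul (ginv g) (eval_word w')
  end.
Definition mG (a : FG G) : G := eval_word (repr a).
Definition tau_top : topology G := quotient_top (markov_top opG) mG.
End Tau.

Definition pi1_tau_top (X : Type) (op : topology X) (x0 : X) : topology (pi1 op x0) :=
  @tau_top (pi1 op x0) (@pi1_qtop X op x0) (@pi1_mul X op x0) (@pi1_inv X op x0) (@pi1_one X op x0).

Arguments pi1_qtop {X} op x0 _.
Arguments Omega_top {X} op x0 _.
Arguments pi1_tau_top {X} op x0 _.

(* (1) <-> (2) is formal.  The generator inclusion of pi_1^qtop into its Markov free
   topological group is continuous and m_G inverts it, so a tau-open set is qtop-open.
   Conversely, if pi_1^qtop is discrete then the discrete topology on the free group is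
   a group topology making the generators continuous, so F_M and hence pi_1^tau are
   discrete.

   (2) <-> (3): discreteness of pi_1^qtop means that every homotopy class is open in
   Omega.  Given [a], the loop a * a^-1 is null-homotopic, so it has a neighbourhood W
   of null-homotopic loops; right translation b |-> b * a^-1 is continuous for the
   compact-open topology, and the preimage of W is a neighbourhood of [a] consisting of
   loops homotopic to [a]. *)

From Stdlib Require Import Reals Lra List ClassicalEpsilon Relations.
From Stdlib Require Import ProofIrrelevance FunctionalExtensionality PropExtensionality.
Open Scope R_scope.

Ltac lra_minmax := simpl in *; unfold Rmax, Rmin in *; repeat destruct Rle_dec; lra.

(** * The unit interval and the unit square *)

Lemma I_eq (a b : I) : ival a = ival b -> a = b.
Proof. destruct a, b; apply subset_eq_compat. Qed.

Lemma ival_bnd (s : I) : 0 <= ival s <= 1.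
Proof. exact (proj2_sig s). Qed.

Lemma clampI_le0 x : x <= 0 -> clampI x = i0.
Proof. intros; apply I_eq; simpl; lra_minmax. Qed.

Lemma clampI_ge1 x : 1 <= x -> clampI x = i1.
Proof. intros; apply I_eq; simpl; lra_minmax. Qed.

Lemma ival_clampI x : 0 <= x <= 1 -> ival (clampI x) = x.
Proof. intros; simpl; lra_minmax. Qed.

Lemma clampI_ival (s : I) : clampI (ival s) = s.
Proof. apply I_eq; pose proof (ival_bnd s); simpl; lra_minmax. Qed.

Lemma clampI_lipschitz (x y : R) :
  Rabs (ival (clampI x) - ival (clampI y)) <= Rabs (x - y).
Proof. simpl; unfold Rabs; repeat destruct Rcase_abs; lra_minmax. Qed.

Lemma continuous_comp {A B C : Type} {oA : topology A} {oB : topology B} {oC : topology C}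
  {f : A -> B} {g : B -> C} :
  continuous oA oB f -> continuous oB oC g -> continuous oA oC (fun x => g (f x)).
Proof. intros Hf Hg V HV; exact (Hf _ (Hg V HV)). Qed.

Lemma I_top_ball t d : 0 < d -> I_top (fun s => Rabs (ival s - ival t) < d).
Proof.
  intros Hd u Hu; exists (d - Rabs (ival u - ival t)); split; [lra|].
  intros s Hs; pose proof (Rabs_triang (ival s - ival u) (ival u - ival t)).
  replace (ival s - ival u + (ival u - ival t)) with (ival s - ival t) in H by ring; lra.
Qed.

Lemma I_top_inter {U V} : I_top U -> I_top V -> I_top (fun s => U s /\ V s).
Proof.
  intros HU HV t [Ut Vt].
  destruct (HU t Ut) as [d1 [Hd1 K1]], (HV t Vt) as [d2 [Hd2 K2]].
  exists (Rmin d1 d2); split; [lra_minmax|].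
  intros s Hs; split; [apply K1|apply K2]; lra_minmax.
Qed.

Definition prodII := prod_top I_top I_top.

(* [W] is a neighbourhood of [p] for the box topology; [prodII W] unfolds to
   [forall p, W p -> nbhd2 p W]. *)
Definition nbhd2 (p : I * I) (W : I * I -> Prop) :=
  exists U V, I_top U /\ I_top V /\ U (fst p) /\ V (snd p) /\
    forall a b, U a -> V b -> W (a, b).

Lemma nbhd2_inter {p W1 W2} : nbhd2 p W1 -> nbhd2 p W2 -> nbhd2 p (fun q => W1 q /\ W2 q).
Proof.
  intros [U1 [V1 [? [? [? [? K1]]]]]] [U2 [V2 [? [? [? [? K2]]]]]].
  exists (fun s => U1 s /\ U2 s), (fun s => V1 s /\ V2 s).
  do 4 (split; [try apply I_top_inter; auto|]).
  intros a b [] []; split; auto.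
Qed.

Lemma nbhd2_mono {p} {W1 W2 : I * I -> Prop} :
  nbhd2 p W1 -> (forall q, W1 q -> W2 q) -> nbhd2 p W2.
Proof. intros [U [V [? [? [? [? K]]]]]] M; exists U, V; repeat split; auto. Qed.

Lemma nbhd2_ball p {d} : 0 < d ->
  nbhd2 p (fun q => Rabs (ival (fst q) - ival (fst p)) < d /\
                    Rabs (ival (snd q) - ival (snd p)) < d).
Proof.
  intros Hd; exists (fun s => Rabs (ival s - ival (fst p)) < d),
                    (fun s => Rabs (ival s - ival (snd p)) < d).
  repeat split; try apply I_top_ball; auto;
    unfold Rminus; rewrite Rplus_opp_r, Rabs_R0; lra.
Qed.

Definition lipschitz (e : I * I -> R) :=
  exists L, 0 < L /\ forall p q,
    Rabs (e q - e p) <= L * (Rabs (ival (fst q) - ival (fst p)) +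
                             Rabs (ival (snd q) - ival (snd p))).

Section LipschitzClosure.
Context {e1 e2 : I * I -> R}.
Hypotheses (H1 : lipschitz e1) (H2 : lipschitz e2).

Let bound_nonneg {L : R} (p q : I * I) : 0 < L ->
  0 <= L * (Rabs (ival (fst q) - ival (fst p)) + Rabs (ival (snd q) - ival (snd p))).
Proof.
  intros; pose proof (Rabs_pos (ival (fst q) - ival (fst p)));
  pose proof (Rabs_pos (ival (snd q) - ival (snd p))); nra.
Qed.

Lemma lipschitz_plus : lipschitz (fun p => e1 p + e2 p).
Proof.
  destruct H1 as [L1 [HL1 K1]], H2 as [L2 [HL2 K2]]; exists (L1 + L2); split; [lra|].
  intros p q; specialize (K1 p q); specialize (K2 p q).
  pose proof (Rabs_triang (e1 q - e1 p) (e2 q - e2 p)).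
  replace (e1 q + e2 q - (e1 p + e2 p)) with (e1 q - e1 p + (e2 q - e2 p)) by ring; lra.
Qed.

Lemma lipschitz_min : lipschitz (fun p => Rmin (e1 p) (e2 p)).
Proof.
  destruct H1 as [L1 [HL1 K1]], H2 as [L2 [HL2 K2]]; exists (L1 + L2); split; [lra|].
  intros p q; specialize (K1 p q); specialize (K2 p q).
  pose proof (bound_nonneg p q HL1); pose proof (bound_nonneg p q HL2).
  revert K1 K2; unfold Rabs; repeat destruct Rcase_abs; lra_minmax.
Qed.

Lemma lipschitz_max : lipschitz (fun p => Rmax (e1 p) (e2 p)).
Proof.
  destruct H1 as [L1 [HL1 K1]], H2 as [L2 [HL2 K2]]; exists (L1 + L2); split; [lra|].
  intros p q; specialize (K1 p q); specialize (K2 p q).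
  pose proof (bound_nonneg p q HL1); pose proof (bound_nonneg p q HL2).
  revert K1 K2; unfold Rabs; repeat destruct Rcase_abs; lra_minmax.
Qed.

Lemma lipschitz_scal c : lipschitz (fun p => c * e1 p).
Proof.
  destruct H1 as [L [HL K]]; exists ((Rabs c + 1) * L); split.
  - pose proof (Rabs_pos c); nra.
  - intros p q; replace (c * e1 q - c * e1 p) with (c * (e1 q - e1 p)) by ring.
    rewrite Rabs_mult; specialize (K p q); pose proof (Rabs_pos c);
    pose proof (Rabs_pos (e1 q - e1 p)); pose proof (bound_nonneg p q HL); nra.
Qed.

End LipschitzClosure.

Lemma lipschitz_const c : lipschitz (fun _ => c).
Proof.
  exists 1; split; [lra|]; intros p q; rewrite Rminus_diag, Rabs_R0.
  pose proof (Rabs_pos (ival (fst q) - ival (fst p)));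
  pose proof (Rabs_pos (ival (snd q) - ival (snd p))); lra.
Qed.

Lemma lipschitz_fst : lipschitz (fun p => ival (fst p)).
Proof.
  exists 1; split; [lra|]; intros p q; pose proof (Rabs_pos (ival (snd q) - ival (snd p))); lra.
Qed.

Lemma lipschitz_snd : lipschitz (fun p => ival (snd p)).
Proof.
  exists 1; split; [lra|]; intros p q; pose proof (Rabs_pos (ival (fst q) - ival (fst p))); lra.
Qed.

Lemma lipschitz_minus e1 e2 : lipschitz e1 -> lipschitz e2 -> lipschitz (fun p => e1 p - e2 p).
Proof.
  intros H1 H2.
  replace (fun p => e1 p - e2 p) with (fun p => e1 p + -1 * e2 p)
    by (apply functional_extensionality; intros; ring).
  apply lipschitz_plus; [exact H1|apply lipschitz_scal, H2].
Qed.

Ltac solve_lipschitz :=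
  repeat first [ apply lipschitz_minus | apply lipschitz_plus | apply lipschitz_scal
               | apply lipschitz_min | apply lipschitz_max | apply lipschitz_fst
               | apply lipschitz_snd | apply lipschitz_const ].

Lemma nbhd2_lipschitz_ball {e : I * I -> R} p {d} : lipschitz e -> 0 < d ->
  nbhd2 p (fun q => Rabs (e q - e p) < d).
Proof.
  intros [L [HL K]] Hd.
  assert (Hr : 0 < d / (2 * L)) by (apply Rdiv_lt_0_compat; lra).
  apply (nbhd2_mono (nbhd2_ball p Hr)).
  intros q [Hq1 Hq2]; specialize (K p q).
  assert (Hsum : Rabs (ival (fst q) - ival (fst p)) + Rabs (ival (snd q) - ival (snd p)) < d / L).
  { replace (d / L) with (d / (2 * L) + d / (2 * L)) by (field; lra); lra. }
  apply (Rmult_lt_compat_l L) in Hsum; [|lra].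
  replace (L * (d / L)) with d in Hsum by (field; lra); lra.
Qed.

Lemma nbhd2_lt {e : I * I -> R} {p c} : lipschitz e -> e p < c -> nbhd2 p (fun q => e q < c).
Proof.
  intros He Hp; apply (nbhd2_mono (nbhd2_lipschitz_ball p He (proj2 (Rlt_0_minus _ _) Hp))).
  intros q; unfold Rabs; destruct Rcase_abs; lra.
Qed.

Lemma nbhd2_gt {e : I * I -> R} {p c} : lipschitz e -> c < e p -> nbhd2 p (fun q => c < e q).
Proof.
  intros He Hp; apply (nbhd2_mono (nbhd2_lipschitz_ball p He (proj2 (Rlt_0_minus _ _) Hp))).
  intros q; unfold Rabs; destruct Rcase_abs; lra.
Qed.

Lemma continuous_clampI_lipschitz {e : I * I -> R} :
  lipschitz e -> continuous prodII I_top (fun p => clampI (e p)).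
Proof.
  intros He V HV p Vp; destruct (HV _ Vp) as [d [Hd K]].
  change (nbhd2 p (fun q => V (clampI (e q)))).
  apply (nbhd2_mono (nbhd2_lipschitz_ball p He Hd)).
  intros q Hq; apply K; eapply Rle_lt_trans; [apply clampI_lipschitz|exact Hq].
Qed.

Lemma continuous_fst : continuous prodII I_top (@fst I I).
Proof.
  intros V HV p Vp; exists V, (fun _ => True); repeat split; auto.
  intros t _; exists 1; split; auto; lra.
Qed.

Lemma continuous_snd : continuous prodII I_top (@snd I I).
Proof.
  intros V HV p Vp; exists (fun _ => True), V; repeat split; auto.
  intros t _; exists 1; split; auto; lra.
Qed.

Lemma continuous_pair {g1 g2 : I * I -> I} :
  continuous prodII I_top g1 -> continuous prodII I_top g2 ->
  continuous prodII prodII (fun p => (g1 p, g2 p)).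
Proof.
  intros H1 H2 W HW p Wp.
  destruct (HW _ Wp) as [U [V [HU [HV [Up [Vp K]]]]]].
  change (nbhd2 p (fun q => W (g1 q, g2 q))).
  apply (nbhd2_mono (nbhd2_inter (H1 U HU p Up) (H2 V HV p Vp))).
  intros q []; apply K; auto.
Qed.

Lemma continuous_diag : continuous I_top prodII (fun s => (s, s)).
Proof.
  intros W HW s Ws; destruct (HW _ Ws) as [U [V [HU [HV [Us [Vs K]]]]]].
  destruct (I_top_inter HU HV s (conj Us Vs)) as [d [Hd Kd]].
  exists d; split; auto; intros t Ht; destruct (Kd t Ht); auto.
Qed.

Lemma continuous_paste (X : Type) (op : topology X) (g1 g2 : I * I -> X)
  (r : I * I -> R) c :
  lipschitz r -> continuous prodII op g1 -> continuous prodII op g2 ->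
  (forall p, r p = c -> g1 p = g2 p) ->
  continuous prodII op (fun p => if Rle_dec (r p) c then g1 p else g2 p).
Proof.
  intros Hr H1 H2 E V HV p Vp.
  change (nbhd2 p (fun q => V (if Rle_dec (r q) c then g1 q else g2 q))).
  destruct (Rle_dec (r p) c) as [Hle|Hgt].
  - destruct (Rle_lt_or_eq_dec _ _ Hle) as [Hlt|Heq].
    + apply (nbhd2_mono (nbhd2_inter (H1 V HV p Vp) (nbhd2_lt Hr Hlt))).
      intros q [Vq Hq]; destruct Rle_dec; auto; lra.
    + assert (Vp2 : V (g2 p)) by (rewrite <- E; auto).
      apply (nbhd2_mono (nbhd2_inter (H1 V HV p Vp) (H2 V HV p Vp2))).
      intros q [Vq1 Vq2]; destruct Rle_dec; auto.
  - apply (nbhd2_mono (nbhd2_inter (H2 V HV p Vp) (nbhd2_gt Hr (Rnot_le_lt _ _ Hgt)))).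
    intros q [Vq Hq]; destruct Rle_dec; auto; lra.
Qed.

Lemma continuous_clampI_lipschitz1 {f : I -> R} :
  lipschitz (fun p => f (fst p)) -> continuous I_top I_top (fun s => clampI (f s)).
Proof. intros Hf; exact (continuous_comp continuous_diag (continuous_clampI_lipschitz Hf)). Qed.

(** * Loops and path homotopies *)

Lemma concat_l {X : Type} (f g : I -> X) (s : I) :
  ival s <= 1/2 -> concat f g s = f (clampI (2 * ival s)).
Proof. intros; unfold concat; destruct Rle_dec; [auto|lra]. Qed.

Lemma concat_r {X : Type} (f g : I -> X) (s : I) :
  1/2 < ival s -> concat f g s = g (clampI (2 * ival s - 1)).
Proof. intros; unfold concat; destruct Rle_dec; [lra|auto]. Qed.

Lemma concat_clampI_l {X : Type} (f g : I -> X) u :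
  0 <= u <= 1/2 -> concat f g (clampI u) = f (clampI (2 * u)).
Proof.
  intros Hu; assert (E : ival (clampI u) = u) by (apply ival_clampI; lra).
  rewrite concat_l, E; [reflexivity|lra].
Qed.

Lemma concat_clampI_r {X : Type} (f g : I -> X) u :
  1/2 < u <= 1 -> concat f g (clampI u) = g (clampI (2 * u - 1)).
Proof.
  intros Hu; assert (E : ival (clampI u) = u) by (apply ival_clampI; lra).
  rewrite concat_r, E; [reflexivity|lra].
Qed.

Section Loops.
Context {X : Type} {op : topology X} {x0 : X}.

Lemma loop_continuous (a : Omega op x0) : continuous I_top op (proj1_sig a).
Proof. exact (proj1 (proj2_sig a)). Qed.

Lemma loop_0 (a : Omega op x0) : proj1_sig a i0 = x0.
Proof. exact (proj1 (proj2 (proj2_sig a))). Qed.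

Lemma loop_1 (a : Omega op x0) : proj1_sig a i1 = x0.
Proof. exact (proj2 (proj2 (proj2_sig a))). Qed.

Lemma loop_clampI_le0 (a : Omega op x0) u : u <= 0 -> proj1_sig a (clampI u) = x0.
Proof. intros; rewrite clampI_le0 by lra; apply loop_0. Qed.

Lemma loop_clampI_ge1 (a : Omega op x0) u : 1 <= u -> proj1_sig a (clampI u) = x0.
Proof. intros; rewrite clampI_ge1 by lra; apply loop_1. Qed.

Lemma continuous_loop_clampI (f : I -> X) (e : I * I -> R) :
  continuous I_top op f -> lipschitz e ->
  continuous prodII op (fun p => f (clampI (e p))).
Proof. intros Hf He; exact (continuous_comp (continuous_clampI_lipschitz He) Hf). Qed.

Lemma continuous_reparam_fst (H : I * I -> X) (e : I * I -> R) :
  continuous prodII op H -> lipschitz e ->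
  continuous prodII op (fun p => H (clampI (e p), snd p)).
Proof.
  intros HH He.
  exact (continuous_comp (continuous_pair (continuous_clampI_lipschitz He) continuous_snd) HH).
Qed.

Lemma continuous_reparam_snd (H : I * I -> X) (e : I * I -> R) :
  continuous prodII op H -> lipschitz e ->
  continuous prodII op (fun p => H (fst p, clampI (e p))).
Proof.
  intros HH He.
  exact (continuous_comp (continuous_pair continuous_fst (continuous_clampI_lipschitz He)) HH).
Qed.

Lemma concat_is_loop f g : is_loop op x0 f -> is_loop op x0 g -> is_loop op x0 (concat f g).
Proof.
  intros [Cf [f0 f1]] [Cg [g0 g1]]; split; [|split].
  - apply (continuous_comp continuous_diag
             (g := fun p => if Rle_dec (ival (fst p)) (1/2)
                            then f (clampI (2 * ival (fst p)))
                            else g (clampI (2 * ival (fst p) - 1)))).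
    apply continuous_paste; try apply continuous_loop_clampI; auto; solve_lipschitz.
    intros p Hp; rewrite Hp, clampI_ge1, clampI_le0 by lra; congruence.
  - unfold concat; simpl; destruct Rle_dec; [|lra]; rewrite clampI_le0 by lra; auto.
  - unfold concat; simpl; destruct Rle_dec; [lra|]; rewrite clampI_ge1 by lra; auto.
Qed.

Lemma rev_path_is_loop f : is_loop op x0 f -> is_loop op x0 (rev_path f).
Proof.
  intros [Cf [f0 f1]]; split; [|split].
  - assert (Hl : lipschitz (fun p => 1 - ival (fst p))) by solve_lipschitz.
    exact (continuous_comp (continuous_clampI_lipschitz1 Hl) Cf).
  - unfold rev_path; simpl; rewrite clampI_ge1 by lra; auto.
  - unfold rev_path; simpl; rewrite clampI_le0 by lra; auto.
Qed.

Lemma loop_of_val f : is_loop op x0 f -> proj1_sig (loop_of op x0 f) = f.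
Proof.
  intros H; unfold loop_of; destruct excluded_middle_informative; [reflexivity|contradiction].
Qed.

Definition loop_mul (a b : Omega op x0) : Omega op x0 :=
  loop_of op x0 (concat (proj1_sig a) (proj1_sig b)).
Definition loop_rev (a : Omega op x0) : Omega op x0 :=
  loop_of op x0 (rev_path (proj1_sig a)).

Lemma loop_mul_val (a b : Omega op x0) :
  proj1_sig (loop_mul a b) = concat (proj1_sig a) (proj1_sig b).
Proof. apply loop_of_val, concat_is_loop; apply proj2_sig. Qed.

Lemma loop_rev_val (a : Omega op x0) : proj1_sig (loop_rev a) = rev_path (proj1_sig a).
Proof. apply loop_of_val, rev_path_is_loop; apply proj2_sig. Qed.

Lemma homotopic_refl (a : Omega op x0) : homotopic a a.
Proof.
  exists (fun p => proj1_sig a (fst p)); repeat split.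
  - exact (continuous_comp continuous_fst (loop_continuous a)).
  - apply loop_0.
  - apply loop_1.
Qed.

Lemma homotopic_sym {a b : Omega op x0} : homotopic a b -> homotopic b a.
Proof.
  intros [H [HC [H0 [H1 He]]]].
  exists (fun p => H (fst p, clampI (1 - ival (snd p)))); split; [|split; [|split]].
  - apply continuous_reparam_snd; auto; solve_lipschitz.
  - intros s; simpl; rewrite clampI_ge1 by lra; auto.
  - intros s; simpl; rewrite clampI_le0 by lra; auto.
  - intros t; apply He.
Qed.

Lemma homotopic_trans {a b c : Omega op x0} :
  homotopic a b -> homotopic b c -> homotopic a c.
Proof.
  intros [H [HC [H0 [H1 He]]]] [G [GC [G0 [G1 Ge]]]].
  exists (fun p => if Rle_dec (ival (snd p)) (1/2) then H (fst p, clampI (2 * ival (snd p)))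
              else G (fst p, clampI (2 * ival (snd p) - 1))); split; [|split; [|split]].
  - apply continuous_paste; [solve_lipschitz| | |].
    + apply continuous_reparam_snd; auto; solve_lipschitz.
    + apply continuous_reparam_snd; auto; solve_lipschitz.
    + intros p Hp; rewrite Hp, clampI_ge1, clampI_le0 by lra; rewrite H1, G0; auto.
  - intros s; simpl; destruct Rle_dec; [|lra]; rewrite clampI_le0 by lra; auto.
  - intros s; simpl; destruct Rle_dec; [lra|]; rewrite clampI_ge1 by lra; auto.
  - intros t; simpl; destruct Rle_dec; [apply He|apply Ge].
Qed.

Lemma loop_clampI_eq (a : Omega op x0) u v :
  ival (clampI u) = ival (clampI v) -> proj1_sig a (clampI u) = proj1_sig a (clampI v).
Proof. intros; f_equal; apply I_eq; auto. Qed.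

(* The straight-line homotopy between the parameters [s] and [f s], cut off by
   [s - t] and [s + t] so that the endpoints of [I] stay fixed. *)
Lemma homotopic_reparam (a g : Omega op x0) (f : I -> R) :
  lipschitz (fun p => f (fst p)) -> f i0 = 0 -> f i1 = 1 -> (forall s, 0 <= f s <= 1) ->
  (forall s, proj1_sig g s = proj1_sig a (clampI (f s))) -> homotopic a g.
Proof.
  intros Hf F0 F1 Fb Eg.
  exists (fun p => proj1_sig a (clampI (Rmax (Rmin (f (fst p)) (ival (fst p) + ival (snd p)))
                                          (ival (fst p) - ival (snd p))))).
  split; [|split; [|split]].
  - apply continuous_loop_clampI; [apply loop_continuous|solve_lipschitz; exact Hf].
  - intros s; transitivity (proj1_sig a (clampI (ival s))); [|now rewrite clampI_ival].
    apply loop_clampI_eq; pose proof (ival_bnd s); pose proof (Fb s); simpl; lra_minmax.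
  - intros s; rewrite Eg; apply loop_clampI_eq.
    pose proof (ival_bnd s); pose proof (Fb s); simpl; lra_minmax.
  - intros t; pose proof (ival_bnd t); simpl; rewrite F0, F1.
    split; [apply loop_clampI_le0|apply loop_clampI_ge1]; lra_minmax.
Qed.

Lemma loop_mul_const_r (a : Omega op x0) : homotopic (loop_mul a (const_loop op x0)) a.
Proof.
  apply homotopic_sym, (homotopic_reparam _ _ (fun s => Rmin 1 (2 * ival s))).
  - solve_lipschitz.
  - simpl; lra_minmax.
  - simpl; lra_minmax.
  - intros s; pose proof (ival_bnd s); lra_minmax.
  - intros s; pose proof (ival_bnd s); cbv beta; rewrite loop_mul_val.
    destruct (Rle_dec (ival s) (1/2)).
    + rewrite concat_l by lra; apply f_equal, f_equal; lra_minmax.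
    + rewrite concat_r by lra; symmetry; apply loop_clampI_ge1; lra_minmax.
Qed.

Lemma loop_mul_const_l (a : Omega op x0) : homotopic (loop_mul (const_loop op x0) a) a.
Proof.
  apply homotopic_sym, (homotopic_reparam _ _ (fun s => Rmax 0 (2 * ival s - 1))).
  - solve_lipschitz.
  - simpl; lra_minmax.
  - simpl; lra_minmax.
  - intros s; pose proof (ival_bnd s); lra_minmax.
  - intros s; pose proof (ival_bnd s); cbv beta; rewrite loop_mul_val.
    destruct (Rle_dec (ival s) (1/2)).
    + rewrite concat_l by lra; symmetry; apply loop_clampI_le0; lra_minmax.
    + rewrite concat_r by lra; apply f_equal, f_equal; lra_minmax.
Qed.

Lemma loop_mul_assoc (a b c : Omega op x0) :
  homotopic (loop_mul a (loop_mul b c)) (loop_mul (loop_mul a b) c).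
Proof.
  apply (homotopic_reparam _ _
           (fun s => Rmin (Rmin (2 * ival s) (ival s + 1/4)) (1/2 * ival s + 1/2))).
  - solve_lipschitz.
  - simpl; lra_minmax.
  - simpl; lra_minmax.
  - intros s; pose proof (ival_bnd s); lra_minmax.
  - intros s; pose proof (ival_bnd s); cbv beta; rewrite !loop_mul_val.
    destruct (Rle_dec (ival s) (1/4)); [|destruct (Rle_dec (ival s) (1/2))].
    + replace (Rmin _ _) with (2 * ival s) by lra_minmax.
      rewrite (concat_l _ _ s), (concat_clampI_l (proj1_sig a)), concat_clampI_l by lra.
      apply f_equal, f_equal; lra.
    + replace (Rmin _ _) with (ival s + 1/4) by lra_minmax.
      rewrite (concat_l _ _ s), (concat_clampI_r (proj1_sig a) (proj1_sig b)),
        (concat_clampI_r (proj1_sig a)), concat_clampI_l by lra.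
      apply f_equal, f_equal; lra.
    + replace (Rmin _ _) with (1/2 * ival s + 1/2) by lra_minmax.
      rewrite (concat_r _ _ s), (concat_clampI_r (proj1_sig a)), concat_clampI_r by lra.
      apply f_equal, f_equal; lra.
Qed.

Lemma loop_mul_rev_r (a : Omega op x0) : homotopic (loop_mul a (loop_rev a)) (const_loop op x0).
Proof.
  exists (fun p => proj1_sig a (clampI (Rmin (Rmin (2 * ival (fst p)) (2 - 2 * ival (fst p)))
                                          (1 - ival (snd p))))).
  split; [|split; [|split]].
  - apply continuous_loop_clampI; [apply loop_continuous|solve_lipschitz].
  - intros s; pose proof (ival_bnd s); rewrite loop_mul_val, loop_rev_val; unfold rev_path.
    destruct (Rle_dec (ival s) (1/2)); [rewrite concat_l|rewrite concat_r]; try lra;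
      apply loop_clampI_eq; lra_minmax.
  - intros s; pose proof (ival_bnd s); apply loop_clampI_le0; lra_minmax.
  - intros t; pose proof (ival_bnd t); split; apply loop_clampI_le0; lra_minmax.
Qed.

Lemma loop_mul_rev_l (a : Omega op x0) : homotopic (loop_mul (loop_rev a) a) (const_loop op x0).
Proof.
  exists (fun p => proj1_sig a (clampI (Rmax (Rmax (1 - 2 * ival (fst p)) (2 * ival (fst p) - 1))
                                          (ival (snd p))))).
  split; [|split; [|split]].
  - apply continuous_loop_clampI; [apply loop_continuous|solve_lipschitz].
  - intros s; pose proof (ival_bnd s); rewrite loop_mul_val, loop_rev_val; unfold rev_path.
    destruct (Rle_dec (ival s) (1/2)); [rewrite concat_l|rewrite concat_r]; try lra;
      apply loop_clampI_eq; lra_minmax.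
  - intros s; pose proof (ival_bnd s); apply loop_clampI_ge1; lra_minmax.
  - intros t; pose proof (ival_bnd t); split; apply loop_clampI_ge1; lra_minmax.
Qed.

Lemma loop_mul_homotopic (a a' b b' : Omega op x0) :
  homotopic a a' -> homotopic b b' -> homotopic (loop_mul a b) (loop_mul a' b').
Proof.
  intros [H [HC [H0 [H1 He]]]] [G [GC [G0 [G1 Ge]]]].
  exists (fun p => if Rle_dec (ival (fst p)) (1/2) then H (clampI (2 * ival (fst p)), snd p)
              else G (clampI (2 * ival (fst p) - 1), snd p)); split; [|split; [|split]].
  - apply continuous_paste; [solve_lipschitz| | |].
    + apply continuous_reparam_fst; auto; solve_lipschitz.
    + apply continuous_reparam_fst; auto; solve_lipschitz.
    + intros p Hp; rewrite Hp, clampI_ge1, clampI_le0 by lra.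
      rewrite (proj2 (He _)), (proj1 (Ge _)); auto.
  - intros s; rewrite loop_mul_val; unfold concat; simpl; destruct Rle_dec; auto.
  - intros s; rewrite loop_mul_val; unfold concat; simpl; destruct Rle_dec; auto.
  - intros t; simpl; destruct Rle_dec; [|lra]; destruct Rle_dec; [lra|].
    rewrite clampI_le0, clampI_ge1 by lra; split; [apply He|apply Ge].
Qed.

Lemma homotopic_of_mul_rev_null (a b : Omega op x0) :
  null_homotopic (loop_mul b (loop_rev a)) -> homotopic b a.
Proof.
  intros Hn.
  eapply homotopic_trans; [apply homotopic_sym, loop_mul_const_r|].
  eapply homotopic_trans.
  { apply loop_mul_homotopic; [apply homotopic_refl|apply homotopic_sym, loop_mul_rev_l]. }
  eapply homotopic_trans; [apply loop_mul_assoc|].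
  eapply homotopic_trans; [|apply loop_mul_const_l].
  apply loop_mul_homotopic; [exact Hn|apply homotopic_refl].
Qed.

End Loops.

(** * The fundamental group *)

Lemma cls_repr {A : Type} {R : A -> A -> Prop} (c : quot R) : cls R (repr c) = c.
Proof.
  unfold repr; destruct (constructive_indefinite_description _ _) as [a Ha].
  destruct c as [P HP]; simpl in *; subst P; apply subset_eq_compat; reflexivity.
Qed.

Lemma rel_repr_cls {A : Type} (R : A -> A -> Prop) (a : A) :
  (forall x, R x x) -> R a (repr (cls R a)).
Proof.
  intros Rrefl; unfold repr; destruct (constructive_indefinite_description _ _) as [b Hb].
  simpl in *; rewrite Hb; apply Rrefl.
Qed.

Section Pi1.
Context {X : Type} {op : topology X} {x0 : X}.

Lemma pi1_cls_eq (a b : Omega op x0) : pi1_cls a = pi1_cls b <-> homotopic a b.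
Proof.
  split.
  - intros E; apply (f_equal (@proj1_sig _ _)) in E; simpl in E.
    rewrite E; apply homotopic_refl.
  - intros H; apply subset_eq_compat, functional_extensionality; intros c.
    apply propositional_extensionality.
    split; intros K; [exact (homotopic_trans (homotopic_sym H) K)|exact (homotopic_trans H K)].
Qed.

Lemma homotopic_repr_cls (a : Omega op x0) : homotopic (repr (pi1_cls a)) a.
Proof. apply pi1_cls_eq, cls_repr. Qed.

Lemma pi1_mul_one (c : pi1 op x0) : pi1_mul c (pi1_one op x0) = c.
Proof.
  rewrite <- (cls_repr c) at 2; apply pi1_cls_eq.
  eapply homotopic_trans; [|apply loop_mul_const_r].
  apply loop_mul_homotopic; [apply homotopic_refl|apply homotopic_repr_cls].
Qed.

Lemma pi1_mul_inv_cancel_l (c d : pi1 op x0) : pi1_mul c (pi1_mul (pi1_inv c) d) = d.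
Proof.
  rewrite <- (cls_repr d) at 2; apply pi1_cls_eq.
  eapply homotopic_trans.
  { apply loop_mul_homotopic; [apply homotopic_refl|].
    eapply homotopic_trans; [apply homotopic_repr_cls|].
    apply loop_mul_homotopic; [apply homotopic_repr_cls|apply homotopic_refl]. }
  eapply homotopic_trans; [apply loop_mul_assoc|].
  eapply homotopic_trans; [|apply loop_mul_const_l].
  apply loop_mul_homotopic; [apply loop_mul_rev_r|apply homotopic_refl].
Qed.

Lemma pi1_inv_mul_cancel_l (c d : pi1 op x0) : pi1_mul (pi1_inv c) (pi1_mul c d) = d.
Proof.
  rewrite <- (cls_repr d) at 2; apply pi1_cls_eq.
  eapply homotopic_trans.
  { apply loop_mul_homotopic; apply homotopic_repr_cls. }
  eapply homotopic_trans; [apply loop_mul_assoc|].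
  eapply homotopic_trans; [|apply loop_mul_const_l].
  apply loop_mul_homotopic; [apply loop_mul_rev_l|apply homotopic_refl].
Qed.

End Pi1.

Section EvalWord.
Variables (G : Type) (gmul : G -> G -> G) (ginv : G -> G) (gone : G).
Hypothesis mul_inv_cancel_l : forall c d, gmul c (gmul (ginv c) d) = d.
Hypothesis inv_mul_cancel_l : forall c d, gmul (ginv c) (gmul c d) = d.

Lemma eval_word_wequiv {w w' : word G} :
  wequiv w w' -> eval_word gmul ginv gone w = eval_word gmul ginv gone w'.
Proof.
  induction 1 as [w w' [w1 w2 b x]| | |]; try congruence.
  induction w1 as [|[[|] y] w1 IH]; simpl; try congruence.
  destruct b; simpl; auto.
Qed.

Lemma mG_FG_gen (c : G) :
  gmul c gone = c -> mG gmul ginv gone (FG_gen c) = c.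
Proof.
  intros Hc; unfold mG, FG_gen.
  rewrite <- (eval_word_wequiv
                (rel_repr_cls (@wequiv G) ((true, c) :: nil) (@rst_refl _ _))).
  exact Hc.
Qed.

End EvalWord.

(** * Generated topologies and the Markov free topological group *)

Lemma open_of_locally_open {T : Type} {op : topology T} (A : T -> Prop) :
  is_topology op ->
  (forall x, A x -> exists O, op O /\ O x /\ forall y, O y -> A y) -> op A.
Proof.
  intros [_ [_ Hunion]] Hloc.
  replace A with (fun x => exists O, (op O /\ forall y, O y -> A y) /\ O x).
  - apply Hunion; tauto.
  - apply functional_extensionality; intros x; apply propositional_extensionality.
    split; [intros [O [[_ HO] Ox]]; auto|intros Ax].
    destruct (Hloc x Ax) as [O [? [? ?]]]; eauto.
Qed.

Lemma is_topology_list_inter {T : Type} {op : topology T} (l : list (T -> Prop)) :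
  is_topology op -> (forall U, In U l -> op U) -> op (fun x => forall U, In U l -> U x).
Proof.
  intros Htop; pose proof Htop as [Htrue [Hinter _]].
  induction l as [|U l IH]; intros Hl.
  - replace (fun x : T => forall U, In U nil -> U x) with (fun _ : T => True); auto.
    apply functional_extensionality; intros x; apply propositional_extensionality.
    split; [intros _ U []|auto].
  - apply (open_of_locally_open _ Htop); intros x Hx.
    exists (fun y => U y /\ forall V, In V l -> V y); repeat split.
    + apply Hinter; [apply Hl; simpl|apply IH; intros; apply Hl; simpl]; auto.
    + apply Hx; simpl; auto.
    + intros; apply Hx; simpl; auto.
    + intros y [Uy Hy] V [<-|HV]; [exact Uy|exact (Hy V HV)].
Qed.

Lemma generated_top_is_topology {T : Type} (S : (T -> Prop) -> Prop) :
  is_topology (generated_top S).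
Proof.
  split; [|split].
  - intros x _; exists nil; simpl; repeat split; intros; tauto.
  - intros A B HA HB x [Ax Bx].
    destruct (HA x Ax) as [l1 [P1 [Q1 R1]]], (HB x Bx) as [l2 [P2 [Q2 R2]]].
    exists (l1 ++ l2); split; [|split].
    + intros U HU; apply in_app_or in HU; destruct HU; [apply P1|apply P2]; assumption.
    + intros U HU; apply in_app_or in HU; destruct HU; [apply Q1|apply Q2]; assumption.
    + intros y Hy; split; [apply R1|apply R2]; intros U HU; apply Hy, in_or_app; auto.
  - intros F HF x [U [FU Ux]].
    destruct (HF U FU x Ux) as [l [P [Q R]]].
    exists l; repeat split; auto; intros y Hy; exists U; auto.
Qed.

Lemma generated_top_subbasic {T : Type} (S : (T -> Prop) -> Prop) (U : T -> Prop) :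
  S U -> generated_top S U.
Proof.
  intros SU x Ux; exists (U :: nil); repeat split.
  - intros V [<-|[]]; auto.
  - intros V [<-|[]]; auto.
  - intros y Hy; apply Hy; simpl; auto.
Qed.

Lemma continuous_into_generated {A B : Type} {opA : topology A}
  (SB : (B -> Prop) -> Prop) (phi : A -> B) :
  is_topology opA -> (forall U, SB U -> opA (fun x => U (phi x))) ->
  continuous opA (generated_top SB) phi.
Proof.
  intros Htop Hsub W HW; apply (open_of_locally_open _ Htop); intros x Wx.
  destruct (HW _ Wx) as [l [P [Q R]]].
  exists (fun y => forall U, In U (map (fun U y => U (phi y)) l) -> U y); repeat split.
  - apply (is_topology_list_inter _ Htop); intros V HV.
    apply in_map_iff in HV; destruct HV as [U [<- HU]]; apply Hsub, P, HU.
  - intros V HV; apply in_map_iff in HV; destruct HV as [U [<- HU]]; apply Q, HU.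
  - intros y Hy; apply R; intros U HU; apply (Hy (fun y => U (phi y))).
    exact (in_map (fun U y => U (phi y)) l U HU).
Qed.

Lemma quotient_top_is_topology {A B : Type} {opA : topology A} (q : A -> B) :
  is_topology opA -> is_topology (quotient_top opA q).
Proof.
  intros [Htrue [Hinter Hunion]]; split; [|split].
  - exact Htrue.
  - intros U V; apply Hinter.
  - intros F HF; unfold quotient_top.
    replace (fun a => exists U, F U /\ U (q a))
      with (fun a => exists U, (exists V, F V /\ U = fun a => V (q a)) /\ U a).
    + apply Hunion; intros U [V [FV ->]]; apply HF, FV.
    + apply functional_extensionality; intros a; apply propositional_extensionality.
      split; [intros [U [[V [FV ->]] Ua]]; eauto|intros [V [FV Va]]].
      exists (fun a => V (q a)); eauto.
Qed.

Lemma FG_gen_continuous {S : Type} (opS : topology S) :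
  is_topology opS -> continuous opS (markov_top opS) (@FG_gen S).
Proof.
  intros Htop; apply (continuous_into_generated _ _ Htop).
  intros U [T [_ [Hgen TU]]]; exact (Hgen U TU).
Qed.

Lemma discrete_group_topology (S : Type) : group_topology (fun _ : (FG S -> Prop) => True).
Proof.
  repeat split; intros V _; auto.
  intros p Hp; exists (fun a => a = fst p), (fun b => b = snd p).
  repeat split; auto; intros a b -> ->; destruct p; exact Hp.
Qed.

Lemma markov_top_discrete {S : Type} (opS : topology S) :
  discrete opS -> discrete (markov_top opS).
Proof.
  intros Hd U; apply generated_top_subbasic.
  exists (fun _ => True); repeat split; [apply discrete_group_topology|intros V _; apply Hd].
Qed.

Section Discreteness.
Context {X : Type} {op : topology X} {x0 : X}.

Lemma pi1_qtop_is_topology : is_topology (pi1_qtop op x0).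
Proof. apply quotient_top_is_topology, generated_top_is_topology. Qed.

Lemma pi1_tau_discrete_iff_qtop :
  discrete (pi1_tau_top op x0) <-> discrete (pi1_qtop op x0).
Proof.
  split; [intros Hd V|intros Hd V; apply markov_top_discrete, Hd].
  replace V
    with (fun c => V (mG (@pi1_mul X op x0) (@pi1_inv X op x0) (pi1_one op x0) (FG_gen c))).
  - exact (FG_gen_continuous _ pi1_qtop_is_topology _ (Hd V)).
  - apply functional_extensionality; intros c; rewrite mG_FG_gen; auto.
    + apply pi1_mul_inv_cancel_l.
    + apply pi1_inv_mul_cancel_l.
    + apply pi1_mul_one.
Qed.

End Discreteness.

(** * The compact-open topology *)

Lemma list_lift {A B : Type} (P : A -> B -> Prop) (l : list A) :
  (forall a, In a l -> exists b, P a b) ->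
  exists m, (forall b, In b m -> exists a, In a l /\ P a b) /\
            (forall a, In a l -> exists b, In b m /\ P a b).
Proof.
  induction l as [|a l IH]; intros Hl.
  - exists nil; split; intros ? [].
  - destruct IH as [m [Hm1 Hm2]]; [intros; apply Hl; simpl; auto|].
    destruct (Hl a (or_introl eq_refl)) as [b Hb].
    exists (b :: m); split.
    + intros b' [<-|Hb']; [exists a; simpl; auto|].
      destruct (Hm1 b' Hb') as [a' [? ?]]; exists a'; simpl; auto.
    + intros a' [<-|Ha']; [exists b; simpl; auto|].
      destruct (Hm2 a' Ha') as [b' [? ?]]; exists b'; simpl; auto.
Qed.

Lemma compact_image {A B : Type} {opA : topology A} {opB : topology B} (f : A -> B)
  (K : A -> Prop) :
  continuous opA opB f -> compact opA K -> compact opB (fun y => exists x, K x /\ y = f x).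
Proof.
  intros Hf HK C HC Hcov.
  destruct (HK (fun V => exists U, C U /\ V = fun x => U (f x))) as [l [Hl Hlcov]].
  - intros V [U [CU ->]]; apply Hf, HC, CU.
  - intros x Kx; destruct (Hcov (f x)) as [U [CU Ux]]; [eauto|].
    exists (fun x => U (f x)); eauto.
  - destruct (list_lift (fun V U => C U /\ V = fun x => U (f x)) l) as [m [Hm1 Hm2]].
    { intros V HV; destruct (Hl V HV) as [U [CU ->]]; eauto. }
    exists m; split.
    + intros U HU; destruct (Hm1 U HU) as [V [_ [CU _]]]; exact CU.
    + intros y [x [Kx ->]]; destruct (Hlcov x Kx) as [V [HV Vx]].
      destruct (Hm2 V HV) as [U [HU [_ ->]]]; eauto.
Qed.

Lemma compact_inter_closed {T : Type} {op : topology T} (K D : T -> Prop) :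
  compact op K -> op (fun x => ~ D x) -> compact op (fun x => K x /\ D x).
Proof.
  intros HK HD C HC Hcov.
  destruct (classic (exists x, K x /\ D x)) as [[z Hz]|Hnone].
  2: { exists nil; split; [intros ? []|intros x Hx; exfalso; eauto]. }
  destruct (Hcov z Hz) as [U0 [CU0 _]].
  destruct (HK (fun V => C V \/ V = fun x => ~ D x)) as [l [Hl Hlcov]].
  - intros V [CV| ->]; auto.
  - intros x Kx; destruct (classic (D x)) as [Dx|nDx].
    + destruct (Hcov x (conj Kx Dx)) as [U [CU Ux]]; eauto.
    + exists (fun x => ~ D x); auto.
  - destruct (list_lift (fun V U => C U /\ (V = U \/ V = fun x => ~ D x)) l) as [m [Hm1 Hm2]].
    { intros V HV; destruct (Hl V HV) as [CV| ->]; eauto. }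
    exists m; split.
    + intros U HU; destruct (Hm1 U HU) as [V [_ [CU _]]]; exact CU.
    + intros x [Kx Dx]; destruct (Hlcov x Kx) as [V [HV Vx]].
      destruct (Hm2 V HV) as [U [HU [_ [<-| ->]]]]; [eauto|contradiction].
Qed.

Definition double_first_half (K : I -> Prop) : I -> Prop :=
  fun u => exists t, (K t /\ ival t <= 1/2) /\ u = clampI (2 * ival t).

Lemma double_first_half_compact (K : I -> Prop) :
  compact I_top K -> compact I_top (double_first_half K).
Proof.
  intros HK; apply (compact_image (opA := I_top)).
  - apply continuous_clampI_lipschitz1; solve_lipschitz.
  - apply compact_inter_closed; auto.
    intros t Ht; exists (ival t - 1/2); split; [lra|].
    intros s Hs; revert Hs; unfold Rabs; destruct Rcase_abs; lra.
Qed.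

Section Translation.
Context {X : Type} {op : topology X} {x0 : X}.

(* On the first half of [I] the loop [b * a'] is [b] run at double speed, so a
   subbasic set [K -> U] containing [b * a'] is reached from the subbasic set
   [double_first_half K -> U] containing [b]. *)
Lemma loop_mul_r_continuous (a' : Omega op x0) :
  continuous (Omega_top op x0) (Omega_top op x0) (fun b => loop_mul b a').
Proof.
  apply continuous_into_generated; [apply generated_top_is_topology|].
  intros S [K [U [HK [HU Hiff]]]].
  apply open_of_locally_open; [apply generated_top_is_topology|]; intros b Sb.
  pose proof (proj1 (Hiff _) Sb) as Hb; clear Sb; rewrite loop_mul_val in Hb.
  exists (fun c : Omega op x0 => forall u, double_first_half K u -> U (proj1_sig c u)).
  repeat split.
  - apply generated_top_subbasic; exists (double_first_half K), U; repeat split; auto.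
    apply double_first_half_compact, HK.
  - intros u [t [[Kt Ht] ->]]; specialize (Hb t Kt); rewrite concat_l in Hb; auto.
  - intros c Hc; apply (proj2 (Hiff _)); intros t Kt; rewrite loop_mul_val.
    destruct (Rle_dec (ival t) (1/2)).
    + rewrite concat_l by auto; apply Hc; exists t; auto.
    + specialize (Hb t Kt); rewrite concat_r in *; auto; lra.
Qed.

End Translation.

Lemma pi1_qtop_discrete_iff_null_nbhd {X : Type} {op : topology X} {x0 : X} :
  discrete (pi1_qtop op x0) <->
  (forall a : Omega op x0, null_homotopic a ->
     exists W : Omega op x0 -> Prop,
       Omega_top op x0 W /\ W a /\ (forall b, W b -> null_homotopic b)).
Proof.
  split.
  - intros Hd a Ha; exists (fun b => pi1_cls b = pi1_cls a); repeat split.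
    + apply (Hd (fun c => c = pi1_cls a)).
    + intros b Hb; apply pi1_cls_eq in Hb; exact (homotopic_trans Hb Ha).
  - intros Hn V; unfold pi1_qtop, quotient_top.
    apply open_of_locally_open; [apply generated_top_is_topology|].
    intros a Va; destruct (Hn _ (loop_mul_rev_r a)) as [W [HW [Wa Wn]]].
    exists (fun b => W (loop_mul b (loop_rev a))); repeat split; auto.
    + apply loop_mul_r_continuous, HW.
    + intros b Wb.
      rewrite (proj2 (pi1_cls_eq b a) (homotopic_of_mul_rev_null _ _ (Wn _ Wb))); exact Va.
Qed.

Theorem proposition3p16 (X : Type) (op : topology X) (x0 : X)
  (Htop : is_topology op) (Hpc : path_connected op) :
  (discrete (pi1_tau_top op x0) <-> discrete (pi1_qtop op x0)) /\
  (discrete (pi1_qtop op x0) <->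
     (forall a : Omega op x0, null_homotopic a ->
        exists W : Omega op x0 -> Prop,
          Omega_top op x0 W /\ W a /\ (forall b, W b -> null_homotopic b))).
Proof. split; [apply pi1_tau_discrete_iff_qtop|apply pi1_qtop_discrete_iff_null_nbhd]. Qed.
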